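(* Let $R$ be a commutative ring with identity and $M$ an $R$-module. Then $$\sqrt{(0:M)}\,M=\sum_{a\in\sqrt{(0:M)}} a\Gamma_a(M).$$
   Context: $(0:M)=\{r\in R\mid rM=0\}$ and $\sqrt{(0:M)}=\{r\in R\mid r^{k}\in(0:M) \text{ for some } k\in\mathbb{Z}^+\}$. For $a\in R$, $a\Gamma_{a}(M)=\{am \mid m\in M,\ a^{k}m=0 \text{ for some } k\in\mathbb{Z}^{+}\}$. *)

From HB Require Import structures.
From mathcomp Require Import all_boot all_order all_algebra.
Set Implicit Arguments. Unset Strict Implicit. Unset Printing Implicit Defensive.
Import GRing.Theory.
Local Open Scope ring_scope.

Section Defs.
Variables (R : comPzRingType) (M : lmodType R).

Definition annM : R -> Prop := fun r => forall m : M, r *: m = 0.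

Definition rad_annM : R -> Prop :=
  fun r => exists k : nat, (0 < k)%N /\ annM (r ^+ k).

Definition Gamma (a : R) : M -> Prop :=
  fun m => exists k : nat, (0 < k)%N /\ a ^+ k *: m = 0.

Definition aGamma (a : R) : M -> Prop :=
  fun x => exists m : M, Gamma a m /\ x = a *: m.

Definition finsums (S : M -> Prop) : M -> Prop :=
  fun x => exists s : seq M, (forall v, v \in s -> S v) /\ x = \sum_(v <- s) v.

Definition idealTimesM (I : R -> Prop) : M -> Prop :=
  finsums (fun x => exists (a : R) (m : M), I a /\ x = a *: m).

Definition sum_aGamma (I : R -> Prop) : M -> Prop :=
  finsums (fun x => exists a : R, I a /\ aGamma a x).

End Defs.

From HB Require Import structures.
From mathcomp Require Import all_boot all_order all_algebra.
Set Implicit Arguments. Unset Strict Implicit. Unset Printing Implicit Defensive.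
Local Open Scope ring_scope.

(* If some power a^k kills M, then every m lies in Gamma_a(M), so a Gamma_a(M)
   is all of a M; summing over a in sqrt(0:M) gives sqrt(0:M) M. *)

Section RadicalTorsion.
Variables (R : comPzRingType) (M : lmodType R).

Lemma finsumsS (S T : M -> Prop) :
  (forall v, S v -> T v) -> forall x, finsums S x -> finsums T x.
Proof. by move=> ST x [s [Ss ->]]; exists s; split=> // v /Ss /ST. Qed.

Lemma Gamma_rad_annM (a : R) (m : M) : rad_annM M a -> Gamma a m.
Proof. by move=> [k [k_gt0 ak0]]; exists k; split. Qed.

Lemma aGamma_rad_annM (a : R) (x : M) :
  rad_annM M a -> aGamma a x <-> exists m : M, x = a *: m.
Proof.
move=> a_rad; split=> [[m [_ ->]] | [m ->]]; first by exists m.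
by exists m; split=> //; apply: Gamma_rad_annM.
Qed.

End RadicalTorsion.

Theorem mainTheorem14 (R : comPzRingType) (M : lmodType R) :
  forall x : M,
    idealTimesM (rad_annM M) x <-> sum_aGamma (rad_annM M) x.
Proof.
move=> x; split; apply: finsumsS => v.
- move=> [a [m [a_rad ->]]]; exists a; split=> //.
  by apply/aGamma_rad_annM => //; exists m.
- move=> [a [a_rad /(aGamma_rad_annM _ a_rad) [m ->]]].
  by exists a, m.
Qed.
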